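(* The function $g_1(t)^2$ is increasing and bounded from above and hence converges to a positive constant as $t$ tends to infinity.
   Context: Consider complete Ricci-flat multiple warped product metrics $dt^2 + \sum_{i=1}^{r} g_i^2(t)\, h_i$ on $[0,\infty) \times M_1 \times \cdots \times M_r$ ($r \geq 2$), where $(M_i,h_i)$ are Einstein manifolds of dimension $d_i$ and Einstein constant $\lambda_i$, with $M_1 = S^1$ (so $d_1=1$, $\lambda_1=0$) and $M_2,\ldots,M_r$ closed Einstein manifolds with $\lambda_i>0$, $d_i>1$; $n=\sum_i d_i$. The circle collapses smoothly at $t=0$: $g_1(0)=0$, $\dot g_1(0)=1$, $g_i(0)\neq 0$, $\dot g_i(0)=0$ for $i>1$. With $\xi = -\dot u + \operatorname{tr} L$ (here $u$ constant), variables $X_i = \frac{\sqrt{d_i}}{\xi}\frac{\dot g_i}{g_i}$, $Y_i = \frac{\sqrt{d_i}}{\xi}\frac{1}{g_i}$ satisfy, in a new variable $s$, $X_i' = X_i(\sum_j X_j^2 - 1) + \frac{\lambda_i Y_i^2}{\sqrt{d_i}}$, $Y_i' = Y_i(\sum_j X_j^2 - \frac{X_i}{\sqrt{d_i}})$. The Ricci-flat metrics correspond to the $(r-2)$-parameter family of trajectories emanating (as $s\to-\infty$) from the critical point $X_1=Y_1=1$, $X_i=Y_i=0$ ($i>1$) and lying in the locus $\sum_i X_i^2 + \sum_{i\geq 2}\lambda_i Y_i^2 = 1$, $\sum_i \sqrt{d_i} X_i = 1$, with $X_i, Y_i > 0$; the metric is recovered via $dt = \exp\left(\int_{s^*}^{s}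 \sum_j X_j^2\right) ds$ and $g_i = \frac{\sqrt{d_i}}{Y_i}\exp\left(\int_{s^*}^{s}\sum_j X_j^2\right)$ for a fixed $s^*$, so that $\dot g_i g_i = \frac{\sqrt{d_i}}{\operatorname{tr} L}\frac{X_i}{Y_i^2}$. These trajectories are defined for all $s$, give complete metrics ($t\to\infty$ as $s\to\infty$), and converge as $s\to\infty$ to the point $E$ with $X_1=0$, $X_i=\frac{\sqrt{d_i}}{n-1}$, $Y_i=\sqrt{\frac{n-2}{\lambda_i}}X_i$ ($i\geq 2$). *)

From Stdlib Require Import Reals Lra.
From Coquelicot Require Import Coquelicot.
Open Scope R_scope.

Fixpoint sumR (k : nat) (f : nat -> R) : R :=
  match k with
  | O => 0
  | S k' => sumR k' f + f k'
  end.

(* Ricci-flatness of  dt^2 + sum_{i<r} g_i(t)^2 h_i  at time t, where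
   (M_i,h_i) is Einstein of dimension d i with Ric(h_i) = lam i * h_i.
   Indices are 0-based: index 0 is the circle factor M_1 = S^1 of the paper.
   - (dt,dt) component:   Ric = - sum_i d_i g_i''/g_i
   - M_i components (per unit vector):
       Ric = - g_i''/g_i - (d_i - 1) (g_i'/g_i)^2
             - (g_i'/g_i) * sum_{j<>i} d_j g_j'/g_j + lam_i / g_i^2. *)
Definition ricci_flat_at (r : nat) (d : nat -> nat) (lam : nat -> R)
    (g g' g'' : nat -> R -> R) (t : R) : Prop :=
  sumR r (fun i => INR (d i) * g'' i t / g i t) = 0 /\
  forall i, (i < r)%nat ->
    - g'' i t / g i t
    - (INR (d i) - 1) * (g' i t / g i t) ^ 2
    - (g' i t / g i t) *
        sumR r (fun j => if Nat.eqb j i then 0 else INR (d j) * g' j t / g j t)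
    + lam i / (g i t) ^ 2 = 0.

From Stdlib Require Import Reals Lra Lia Classical.
From Coquelicot Require Import Coquelicot.
Open Scope R_scope.

(* Index 0 is the circle.  Its Ricci equation [g_0'' = - g_0' sum_(j>0) d_j g_j'/g_j]
   makes [g_0'] times the volume density of the other factors constant, so
   [g_0' > 0] and [g_0] increases.  Every [g_i'] (i > 0) stays nonnegative, so the
   mean curvature [L = sum_j d_j g_j'/g_j] is positive, and Raychaudhuri's equation
   [L' = - sum_j d_j (g_j'/g_j)^2 <= - L^2/n] gives [L <= n/(t - 1)].  Then the
   equation of [g_1] yields [(g_1 g_1')' >= lam_1 - L g_1 g_1'], so [g_1] grows at
   least linearly; as [d_1 >= 2], the constant first integral bounds [g_0'] by
   [g_1(0)^2 / g_1(t)^2 = O(t^-2)], which is integrable, so [g_0] is bounded. *)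

Lemma continuity_pt_is_derive (f : R -> R) (x l : R) :
  is_derive f x l -> continuity_pt f x.
Proof.
  intros Hf; apply derivable_continuous_pt; exists l; exact (proj1 (is_derive_Reals f x l) Hf).
Qed.

Lemma is_derive_exp_comp (f : R -> R) (t df : R) :
  is_derive f t df -> is_derive (fun s => exp (f s)) t (df * exp (f t)).
Proof. intros Hf; exact (is_derive_comp exp f t _ df (is_derive_exp (f t)) Hf). Qed.

Lemma is_derive_ln_comp (f : R -> R) (t df : R) :
  is_derive f t df -> 0 < f t -> is_derive (fun s => ln (f s)) t (df / f t).
Proof. intros Hf Hpos; exact (is_derive_comp ln f t _ df (is_derive_ln (f t) Hpos) Hf). Qed.

Lemma continuity_pt_pos_right (f : R -> R) (x : R) : continuity_pt f x ->
  (forall t, x < t -> 0 < f t) -> f x <> 0 -> 0 < f x.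
Proof.
  intros Hc Hpos Hne.
  destruct (Rtotal_order 0 (f x)) as [Hlt|[Heq|Hneg]]; [exact Hlt|congruence|exfalso].
  destruct (Hc (- f x / 2)) as [delta [Hdelta Hnear]]; [lra|].
  specialize (Hnear (x + delta / 2)).
  assert (Hd : R_dist (f (x + delta / 2)) (f x) < - f x / 2).
  { apply Hnear; split; [split; [exact I|lra]|].
    unfold R_dist; simpl; unfold R_dist.
    replace (x + delta / 2 - x) with (delta / 2) by ring; rewrite Rabs_right; lra. }
  specialize (Hpos (x + delta / 2) ltac:(lra)).
  unfold R_dist in Hd; apply Rabs_def2 in Hd; lra.
Qed.

(* The mean value point may be an endpoint, where [df] carries no sign
   information; [df] is therefore replaced by [0] outside [(a, b)]. *)
Lemma is_derive_nonneg_le (f df : R -> R) (a b : R) : a <= b ->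
  (forall x, a <= x <= b -> is_derive f x (df x)) ->
  (forall x, a < x < b -> 0 <= df x) -> f a <= f b.
Proof.
  intros Hab Hd Hs.
  set (df0 := fun x => if Rlt_dec a x then if Rlt_dec x b then df x else 0 else 0).
  assert (Hdf0 : forall x, 0 <= df0 x).
  { intros x; unfold df0.
    destruct (Rlt_dec a x); [destruct (Rlt_dec x b)|]; [apply Hs; lra|lra|lra]. }
  destruct (MVT_gen f a b df0) as [c [_ Hc]].
  - rewrite Rmin_left, Rmax_right by lra; intros x Hx; unfold df0.
    destruct (Rlt_dec a x); [|lra]; destruct (Rlt_dec x b); [|lra].
    apply Hd; lra.
  - rewrite Rmin_left, Rmax_right by lra; intros x Hx.
    exact (continuity_pt_is_derive _ _ _ (Hd x Hx)).
  - specialize (Hdf0 c); nra.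
Qed.

Lemma is_derive_zero_eq (f df : R -> R) (a b : R) : a <= b ->
  (forall x, a <= x <= b -> is_derive f x (df x)) ->
  (forall x, a < x < b -> df x = 0) -> f a = f b.
Proof.
  intros Hab Hd H0.
  assert (f a <= f b).
  { apply (is_derive_nonneg_le f df a b Hab Hd); intros x Hx; rewrite H0; lra. }
  assert (- f a <= - f b).
  { apply (is_derive_nonneg_le (fun x => - f x) (fun x => - df x) a b Hab).
    - intros x Hx; exact (is_derive_opp f x (df x) (Hd x Hx)).
    - intros x Hx; rewrite H0; lra. }
  lra.
Qed.

(* [1/L - (t - a)/n] is nondecreasing. *)
Lemma riccati_upper_bound (L dL : R -> R) (a n : R) : 0 < n ->
  (forall t, a <= t -> is_derive L t (dL t)) ->
  (forall t, a <= t -> 0 < L t) ->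
  (forall t, a < t -> L t ^ 2 <= - n * dL t) ->
  forall t, a < t -> L t <= n / (t - a).
Proof.
  intros Hn Hd Hpos Hric t Ht.
  assert (Hmono : / L a - / n * (a - a) <= / L t - / n * (t - a)).
  { apply (is_derive_nonneg_le (fun s => / L s - / n * (s - a))
      (fun s => - dL s / L s ^ 2 - / n * (1 - 0))); [lra| |].
    - intros x Hx; apply (is_derive_minus (fun s => / L s) (fun s => / n * (s - a))).
      + apply is_derive_inv; [apply Hd; lra|specialize (Hpos x ltac:(lra)); lra].
      + apply is_derive_scal, (is_derive_minus (fun s => s) (fun _ => a));
          [exact (is_derive_id x)|exact (is_derive_const a x)].
    - intros x Hx; specialize (Hric x ltac:(lra)); specialize (Hpos x ltac:(lra)).
      assert (E : - dL x / L x ^ 2 - / n * (1 - 0) = (- n * dL x - L x ^ 2) / (n * L x ^ 2))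
        by (field; lra).
      rewrite E; apply Rdiv_le_0_compat; [lra|].
      apply Rmult_lt_0_compat; [lra|apply pow_lt; lra]. }
  pose proof (Hpos a ltac:(lra)); pose proof (Hpos t ltac:(lra)).
  assert (Hinv : 0 < / L a) by (apply Rinv_0_lt_compat; lra).
  assert (Hlt : / n * (t - a) * (n * L t) < / L t * (n * L t))
    by (apply Rmult_lt_compat_r; nra).
  replace (/ n * (t - a) * (n * L t)) with ((t - a) * L t) in Hlt by (field; lra).
  replace (/ L t * (n * L t)) with n in Hlt by (field; lra).
  apply Rle_div_r; lra.
Qed.

(* Integrating factor [(t - a)^k]. *)
Lemma linear_lower_bound (y dy : R -> R) (a c : R) (k : nat) :
  (forall t, a <= t -> is_derive y t (dy t)) -> 0 <= y a ->
  (forall t, a < t -> c - INR k * y t / (t - a) <= dy t) ->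
  forall t, a < t -> c * (t - a) / (INR k + 1) <= y t.
Proof.
  intros Hd Hya Hdy t Ht.
  assert (Hk : 0 < INR k + 1) by (pose proof (pos_INR k); lra).
  set (b := c / (INR k + 1)).
  assert (Hmono : (a - a) ^ k * y a - b * (a - a) ^ S k
                  <= (t - a) ^ k * y t - b * (t - a) ^ S k).
  { apply (is_derive_nonneg_le (fun s => (s - a) ^ k * y s - b * (s - a) ^ S k)
      (fun s => INR k * (1 - 0) * (s - a) ^ pred k * y s + (s - a) ^ k * dy s
                - b * (INR (S k) * (1 - 0) * (s - a) ^ pred (S k)))); [lra| |].
    - intros x Hx.
      assert (Hlin : is_derive (fun s => s - a) x (1 - 0))
        by (apply (is_derive_minus (fun s => s) (fun _ => a));
            [exact (is_derive_id x)|exact (is_derive_const a x)]).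
      apply (is_derive_minus (fun s => (s - a) ^ k * y s) (fun s => b * (s - a) ^ S k)).
      + apply (is_derive_mult (fun s => (s - a) ^ k) y); [|apply Hd; lra|apply Rmult_comm].
        apply (is_derive_pow (fun s => s - a)), Hlin.
      + apply is_derive_scal, (is_derive_pow (fun s => s - a)), Hlin.
    - intros x Hx; specialize (Hdy x ltac:(lra)).
      assert (Hp : 0 < (x - a) ^ k) by (apply pow_lt; lra).
      assert (Hy : (x - a) ^ k * (c - INR k * y x / (x - a)) <= (x - a) ^ k * dy x)
        by (apply Rmult_le_compat_l; lra).
      rewrite S_INR; unfold b.
      destruct k as [|m].
      + simpl in *; lra.
      + replace ((x - a) ^ S m * (c - INR (S m) * y x / (x - a)))
          with (c * (x - a) ^ S m - INR (S m) * (x - a) ^ m * y x) in Hy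
          by (simpl; field; lra).
        cbn [Init.Nat.pred].
        replace (c / (INR (S m) + 1) * ((INR (S m) + 1) * (1 - 0) * (x - a) ^ S m))
          with (c * (x - a) ^ S m) by (field; lra).
        lra. }
  assert (Hp : 0 < (t - a) ^ k) by (apply pow_lt; lra).
  replace (a - a) with 0 in Hmono by ring.
  assert (H0 : 0 <= 0 ^ k * y a - b * 0 ^ S k)
    by (destruct k; simpl; [|rewrite !Rmult_0_l]; lra).
  apply (Rmult_le_reg_l ((t - a) ^ k)); [exact Hp|].
  replace ((t - a) ^ k * (c * (t - a) / (INR k + 1))) with (b * (t - a) ^ S k)
    by (unfold b; simpl; field; lra).
  lra.
Qed.

Lemma quadratic_lower_bound (f df : R -> R) (a b : R) :
  (forall t, a <= t -> is_derive f t (df t)) ->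
  (forall t, a < t -> 2 * b * (t - a) <= df t) ->
  forall t, a <= t -> f a + b * (t - a) ^ 2 <= f t.
Proof.
  intros Hd Hdf t Ht.
  assert (Hmono : f a - b * (a - a) ^ 2 <= f t - b * (t - a) ^ 2).
  { apply (is_derive_nonneg_le (fun s => f s - b * (s - a) ^ 2)
      (fun s => df s - b * (INR 2 * (1 - 0) * (s - a) ^ pred 2))); [exact Ht| |].
    - intros x Hx; apply (is_derive_minus f (fun s => b * (s - a) ^ 2)); [apply Hd; lra|].
      apply is_derive_scal, (is_derive_pow (fun s => s - a)).
      apply (is_derive_minus (fun s => s) (fun _ => a));
        [exact (is_derive_id x)|exact (is_derive_const a x)].
    - intros x Hx; specialize (Hdf x ltac:(lra)); simpl; lra. }
  replace (a - a) with 0 in Hmono by ring; simpl in Hmono; lra.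
Qed.

Lemma bounded_of_is_derive_le_inv_sq (f df : R -> R) (a A : R) : 0 <= A ->
  (forall t, a + 1 <= t -> is_derive f t (df t)) ->
  (forall t, a + 1 < t -> df t <= A / (t - a) ^ 2) ->
  forall t, a + 1 <= t -> f t <= f (a + 1) + A.
Proof.
  intros HA Hd Hdf t Ht.
  assert (Hmono : - f (a + 1) - A / (a + 1 - a) <= - f t - A / (t - a)).
  { apply (is_derive_nonneg_le (fun s => - f s - A / (s - a))
      (fun s => - df s - (0 * (s - a) - A * (1 - 0)) / (s - a) ^ 2)); [exact Ht| |].
    - intros x Hx.
      apply (is_derive_minus (fun s => - f s) (fun s => A / (s - a))).
      + exact (is_derive_opp f x (df x) (Hd x ltac:(lra))).
      + apply (is_derive_div (fun _ => A) (fun s => s - a)); [exact (is_derive_const A x)| |lra].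
        apply (is_derive_minus (fun s => s) (fun _ => a));
          [exact (is_derive_id x)|exact (is_derive_const a x)].
    - intros x Hx; specialize (Hdf x ltac:(lra)).
      replace ((0 * (x - a) - A * (1 - 0)) / (x - a) ^ 2) with (- (A / (x - a) ^ 2))
        by (field; lra).
      lra. }
  replace (a + 1 - a) with 1 in Hmono by ring.
  assert (0 <= A / (t - a)) by (apply Rdiv_le_0_compat; lra).
  lra.
Qed.

Lemma is_lim_p_infty_nondecreasing (f : R -> R) (a B : R) :
  (forall x y, a <= x <= y -> f x <= f y) -> (forall x, a <= x -> f x <= B) ->
  exists l : R, is_lim f p_infty l /\ forall x, a <= x -> f x <= l.
Proof.
  intros Hmono HB.
  set (E := fun v => exists x, a <= x /\ v = f x).
  destruct (completeness E) as [l [Hub Hlub]].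
  - exists B; intros v [x [Hx ->]]; apply HB, Hx.
  - exists (f a), a; split; [lra|reflexivity].
  - assert (Hle : forall x, a <= x -> f x <= l) by (intros x Hx; apply Hub; exists x; auto).
    exists l; split; [|exact Hle].
    apply is_lim_spec; intros eps; simpl.
    destruct (classic (exists x0, a <= x0 /\ l - eps < f x0)) as [[x0 [Hx0 Hlt]]|Hno].
    + exists x0; intros x Hx.
      pose proof (Hmono x0 x ltac:(lra)); pose proof (Hle x ltac:(lra)).
      pose proof (cond_pos eps); apply Rabs_def1; lra.
    + exfalso.
      assert (l <= l - eps).
      { apply Hlub; intros v [x [Hx ->]].
        apply Rnot_lt_le; intros Hlt; apply Hno; exists x; auto. }
      pose proof (cond_pos eps); lra.
Qed.

Lemma sumR_ext (k : nat) (f h : nat -> R) :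
  (forall j, (j < k)%nat -> f j = h j) -> sumR k f = sumR k h.
Proof.
  induction k as [|k IH]; intros H; simpl; [reflexivity|].
  rewrite H by lia; f_equal; apply IH; intros j Hj; apply H; lia.
Qed.

Lemma sumR_minus (k : nat) (f h : nat -> R) :
  sumR k (fun j => f j - h j) = sumR k f - sumR k h.
Proof. induction k as [|k IH]; simpl; [|rewrite IH]; ring. Qed.

Lemma sumR_scal (k : nat) (a : R) (f : nat -> R) :
  sumR k (fun j => a * f j) = a * sumR k f.
Proof. induction k as [|k IH]; simpl; [|rewrite IH]; ring. Qed.

Lemma sumR_nonneg (k : nat) (f : nat -> R) :
  (forall j, (j < k)%nat -> 0 <= f j) -> 0 <= sumR k f.
Proof.
  induction k as [|k IH]; intros H; simpl; [lra|].
  pose proof (H k ltac:(lia)); pose proof (IH ltac:(intros j Hj; apply H; lia)); lra.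
Qed.

Lemma sumR_split (k i : nat) (f : nat -> R) : (i < k)%nat ->
  sumR k f = f i + sumR k (fun j => if Nat.eqb j i then 0 else f j).
Proof.
  induction k as [|k IH]; intros Hi; simpl; [lia|].
  destruct (Nat.eqb k i) eqn:E.
  - apply Nat.eqb_eq in E; subst k.
    rewrite (sumR_ext i (fun j => if Nat.eqb j i then 0 else f j) f); [ring|].
    intros j Hj; destruct (Nat.eqb j i) eqn:E; [apply Nat.eqb_eq in E; lia|reflexivity].
  - apply Nat.eqb_neq in E; rewrite IH by lia; ring.
Qed.

Lemma sumR_ge_term (k i : nat) (f : nat -> R) : (i < k)%nat ->
  (forall j, (j < k)%nat -> 0 <= f j) -> f i <= sumR k f.
Proof.
  intros Hi Hf; rewrite (sumR_split k i f Hi).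
  assert (0 <= sumR k (fun j => if Nat.eqb j i then 0 else f j)); [|lra].
  apply sumR_nonneg; intros j Hj; destruct (Nat.eqb j i); [lra|apply Hf, Hj].
Qed.

Lemma sumR_INR (k : nat) (h : nat -> nat) :
  exists N, INR N = sumR k (fun j => INR (h j)).
Proof.
  induction k as [|k [N HN]]; [exists 0%nat; reflexivity|].
  exists (N + h k)%nat; rewrite plus_INR, HN; reflexivity.
Qed.

(* Expand [0 <= sum_j w_j (x_j - m)^2] at the weighted mean [m]. *)
Lemma sumR_cauchy_schwarz (k : nat) (w x : nat -> R) :
  (forall j, (j < k)%nat -> 0 <= w j) -> 0 < sumR k w ->
  sumR k (fun j => w j * x j) ^ 2 <= sumR k w * sumR k (fun j => w j * x j ^ 2).
Proof.
  intros Hw HW.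
  set (W := sumR k w); set (S1 := sumR k (fun j => w j * x j)).
  set (S2 := sumR k (fun j => w j * x j ^ 2)); set (m := S1 / W); fold W in HW.
  assert (Hvar : 0 <= sumR k (fun j => w j * (x j - m) ^ 2)).
  { apply sumR_nonneg; intros j Hj; apply Rmult_le_pos; [apply Hw, Hj|apply pow2_ge_0]. }
  rewrite (sumR_ext k _ (fun j => w j * x j ^ 2 - ((2 * m) * (w j * x j) - m ^ 2 * w j)))
    in Hvar by (intros; ring).
  rewrite sumR_minus, sumR_minus, !sumR_scal in Hvar; fold W S1 S2 in Hvar.
  assert (E : S2 - (2 * m * S1 - m ^ 2 * W) = (W * S2 - S1 ^ 2) / W) by (unfold m; field; lra).
  rewrite E in Hvar.
  apply Rmult_le_compat_r with (r := W) in Hvar; [|lra].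
  replace ((W * S2 - S1 ^ 2) / W * W) with (W * S2 - S1 ^ 2) in Hvar by (field; lra).
  lra.
Qed.

Lemma is_derive_sumR (k : nat) (f df : nat -> R -> R) (t : R) :
  (forall j, (j < k)%nat -> is_derive (f j) t (df j t)) ->
  is_derive (fun s => sumR k (fun j => f j s)) t (sumR k (fun j => df j t)).
Proof.
  induction k as [|k IH]; intros H; simpl.
  - exact (is_derive_const 0 t).
  - apply (is_derive_plus (fun s => sumR k (fun j => f j s)) (f k)); [apply IH|apply H];
      intros; try apply H; lia.
Qed.

Section CircleCollapse.

Variables (r : nat) (d : nat -> nat) (lam : nat -> R) (g g' g'' : nat -> R -> R).
Hypothesis Hr : (2 <= r)%nat.
Hypothesis Hd0 : d 0%nat = 1%nat.
Hypothesis Hlam0 : lam 0%nat = 0.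
Hypothesis Hdi : forall i, (1 <= i < r)%nat -> (1 < d i)%nat /\ 0 < lam i.
Hypothesis Hder : forall i, (i < r)%nat -> forall t,
    is_derive (g i) t (g' i t) /\ is_derive (g' i) t (g'' i t).
Hypothesis Hpos : forall i, (i < r)%nat -> forall t, 0 < t -> 0 < g i t.
Hypothesis Hg0 : g 0%nat 0 = 0.
Hypothesis Hg'0 : g' 0%nat 0 = 1.
Hypothesis Hgi0 : forall i, (1 <= i < r)%nat -> g i 0 <> 0 /\ g' i 0 = 0.
Hypothesis Hric : forall t, 0 < t -> ricci_flat_at r d lam g g' g'' t.

Definition mean_curv (t : R) : R := sumR r (fun j => INR (d j) * g' j t / g j t).

Definition mean_curv_off (i : nat) (t : R) : R :=
  sumR r (fun j => if Nat.eqb j i then 0 else INR (d j) * g' j t / g j t).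

Definition log_vol_rest (t : R) : R :=
  sumR r (fun j => if Nat.eqb j 0 then 0 else INR (d j) * ln (g j t)).

Definition dim : R := sumR r (fun j => INR (d j)).

Lemma g_pos (j : nat) (t : R) : (1 <= j < r)%nat -> 0 <= t -> 0 < g j t.
Proof.
  intros Hj Ht; destruct (Req_dec t 0) as [->|Ht0]; [|apply Hpos; [lia|lra]].
  apply continuity_pt_pos_right; [|intros s Hs; apply Hpos; [lia|exact Hs]|apply Hgi0, Hj].
  exact (continuity_pt_is_derive _ _ _ (proj1 (Hder j ltac:(lia) 0))).
Qed.

Lemma mean_curv_split (i : nat) (t : R) : (i < r)%nat ->
  mean_curv t = INR (d i) * g' i t / g i t + mean_curv_off i t.
Proof. intros Hi; exact (sumR_split r i _ Hi). Qed.

Lemma is_derive_log_vol_rest (t : R) : 0 <= t ->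
  is_derive log_vol_rest t (mean_curv_off 0 t).
Proof.
  intros Ht; apply (is_derive_sumR r (fun j s => if Nat.eqb j 0 then 0 else INR (d j) * ln (g j s))
    (fun j s => if Nat.eqb j 0 then 0 else INR (d j) * g' j s / g j s)).
  intros [|j] Hj; simpl; [exact (is_derive_const 0 t)|].
  replace (INR (d (S j)) * g' (S j) t / g (S j) t)
    with (INR (d (S j)) * (g' (S j) t / g (S j) t)) by (unfold Rdiv; ring).
  apply is_derive_scal, is_derive_ln_comp; [apply Hder; lia|apply g_pos; [lia|lra]].
Qed.

Lemma circle_eq (t : R) : 0 < t -> g'' 0%nat t = - g' 0%nat t * mean_curv_off 0 t.
Proof.
  intros Ht; destruct (Hric t Ht) as [_ Hi]; specialize (Hi 0%nat ltac:(lia)).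
  fold (mean_curv_off 0 t) in Hi; rewrite Hd0, Hlam0 in Hi.
  pose proof (Hpos 0%nat ltac:(lia) t Ht).
  assert (E : g'' 0%nat t + g' 0%nat t * mean_curv_off 0 t
    = - g 0%nat t * (- g'' 0%nat t / g 0%nat t - (INR 1 - 1) * (g' 0%nat t / g 0%nat t) ^ 2
        - g' 0%nat t / g 0%nat t * mean_curv_off 0 t + 0 / g 0%nat t ^ 2))
    by (simpl; field; lra).
  rewrite Hi in E; lra.
Qed.

Lemma circle_first_integral (t : R) : 0 <= t ->
  g' 0%nat t * exp (log_vol_rest t) = exp (log_vol_rest 0).
Proof.
  intros Ht; rewrite <- (Rmult_1_l (exp (log_vol_rest 0))), <- Hg'0; symmetry.
  apply (is_derive_zero_eq (fun s => g' 0%nat s * exp (log_vol_rest s))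
    (fun s => g'' 0%nat s * exp (log_vol_rest s)
              + g' 0%nat s * (mean_curv_off 0 s * exp (log_vol_rest s)))); [exact Ht| |].
  - intros x Hx; apply (is_derive_mult (g' 0%nat) (fun s => exp (log_vol_rest s)));
      [apply Hder; lia|apply is_derive_exp_comp, is_derive_log_vol_rest; lra|apply Rmult_comm].
  - intros x Hx; rewrite circle_eq by lra; ring.
Qed.

Lemma circle_deriv_pos (t : R) : 0 <= t -> 0 < g' 0%nat t.
Proof.
  intros Ht; pose proof (circle_first_integral t Ht).
  pose proof (exp_pos (log_vol_rest t)); pose proof (exp_pos (log_vol_rest 0)); nra.
Qed.

Lemma circle_increasing (t1 t2 : R) : 0 <= t1 -> t1 < t2 -> g 0%nat t1 < g 0%nat t2.
Proof.
  intros H1 H2; apply (incr_function_le (g 0%nat) 0 p_infty (g' 0%nat)); simpl; auto.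
  - intros x Hx _; apply Hder; lia.
  - intros x Hx _; apply circle_deriv_pos, Hx.
Qed.

Lemma circle_nonneg (t : R) : 0 <= t -> 0 <= g 0%nat t.
Proof.
  intros Ht; destruct (Req_dec t 0) as [->|Ht0]; [lra|].
  rewrite <- Hg0; left; apply circle_increasing; lra.
Qed.

Lemma factor_eq (i : nat) (t : R) : (1 <= i < r)%nat -> 0 < t ->
  g'' i t * g i t = g' i t ^ 2 - g i t * g' i t * mean_curv t + lam i.
Proof.
  intros Hi Ht; destruct (Hric t Ht) as [_ Hric_i]; specialize (Hric_i i ltac:(lia)).
  fold (mean_curv_off i t) in Hric_i; rewrite (mean_curv_split i t) by lia.
  pose proof (g_pos i t Hi ltac:(lra)).
  assert (E : g'' i t * g i t - (g' i t ^ 2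
      - g i t * g' i t * (INR (d i) * g' i t / g i t + mean_curv_off i t) + lam i)
    = - g i t ^ 2 * (- g'' i t / g i t - (INR (d i) - 1) * (g' i t / g i t) ^ 2
        - g' i t / g i t * mean_curv_off i t + lam i / g i t ^ 2))
    by (field; lra).
  rewrite Hric_i in E; lra.
Qed.

(* With [V = g_0 exp log_vol_rest] the volume density, [g_i' V / g_i] has
   derivative [lam_i V / g_i^2 >= 0] and vanishes at [0]. *)
Lemma factor_deriv_nonneg (i : nat) (t : R) : (1 <= i < r)%nat -> 0 <= t -> 0 <= g' i t.
Proof.
  intros Hi Ht.
  destruct (Req_dec t 0) as [->|Ht0]; [rewrite (proj2 (Hgi0 i Hi)); lra|].
  set (E := fun s => exp (log_vol_rest s - ln (g i s))).
  assert (Hmono : g' i 0 * g 0%nat 0 * E 0 <= g' i t * g 0%nat t * E t).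
  { apply (is_derive_nonneg_le (fun s => g' i s * g 0%nat s * E s)
      (fun s => (g'' i s * g 0%nat s + g' i s * g' 0%nat s) * E s
                + g' i s * g 0%nat s * ((mean_curv_off 0 s - g' i s / g i s) * E s)));
      [exact Ht| |].
    - intros x Hx.
      apply (is_derive_mult (fun s => g' i s * g 0%nat s) E); [| |apply Rmult_comm].
      + apply (is_derive_mult (g' i) (g 0%nat)); [apply Hder; lia|apply Hder; lia|apply Rmult_comm].
      + apply is_derive_exp_comp.
        apply (is_derive_minus log_vol_rest (fun s => ln (g i s))).
        * apply is_derive_log_vol_rest; lra.
        * apply is_derive_ln_comp; [apply Hder; lia|apply g_pos; [exact Hi|lra]].
    - intros x Hx.
      pose proof (g_pos i x Hi ltac:(lra)); pose proof (Hpos 0%nat ltac:(lia) x ltac:(lra)).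
      assert (HE : 0 < E x) by apply exp_pos.
      assert (Hlam : 0 < lam i) by apply (Hdi i Hi).
      assert (Hgi'' : g'' i x = (g' i x ^ 2 - g i x * g' i x * mean_curv x + lam i) / g i x)
        by (rewrite <- factor_eq by (auto || lra); field; lra).
      rewrite Hgi'', (mean_curv_split 0) by lia; rewrite Hd0.
      replace ((_ * g 0%nat x + _) * E x + _) with (lam i * g 0%nat x / g i x * E x)
        by (simpl; field; lra).
      apply Rmult_le_pos; [apply Rdiv_le_0_compat; nra|lra]. }
  rewrite Hg0, Rmult_0_r, Rmult_0_l in Hmono.
  assert (0 < g 0%nat t * E t); [|nra].
  apply Rmult_lt_0_compat; [apply Hpos; [lia|lra]|apply exp_pos].
Qed.

Lemma log_deriv_nonneg (j : nat) (t : R) : (j < r)%nat -> 0 < t ->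
  0 <= INR (d j) * g' j t / g j t.
Proof.
  intros Hj Ht; pose proof (Hpos j Hj t Ht).
  apply Rdiv_le_0_compat; [apply Rmult_le_pos; [apply pos_INR|]|lra].
  destruct j as [|j]; [left; apply circle_deriv_pos; lra|apply factor_deriv_nonneg; lia + lra].
Qed.

Lemma mean_curv_pos (t : R) : 0 < t -> 0 < mean_curv t.
Proof.
  intros Ht; rewrite (mean_curv_split 0) by lia; rewrite Hd0.
  assert (0 <= mean_curv_off 0 t).
  { apply sumR_nonneg; intros j Hj; destruct (Nat.eqb j 0); [lra|apply log_deriv_nonneg; auto]. }
  assert (0 < INR 1 * g' 0%nat t / g 0%nat t); [|lra].
  apply Rdiv_lt_0_compat; [simpl; rewrite Rmult_1_l; apply circle_deriv_pos|apply Hpos]; lia + lra.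
Qed.

(* Raychaudhuri: the [dt dt] component of the Ricci tensor. *)
Lemma is_derive_mean_curv (t : R) : 0 < t ->
  is_derive mean_curv t (- sumR r (fun j => INR (d j) * (g' j t / g j t) ^ 2)).
Proof.
  intros Ht.
  replace (- sumR r (fun j => INR (d j) * (g' j t / g j t) ^ 2))
    with (sumR r (fun j =>
      (INR (d j) * g'' j t * g j t - INR (d j) * g' j t * g' j t) / g j t ^ 2)).
  - apply (is_derive_sumR r (fun j s => INR (d j) * g' j s / g j s)
      (fun j s => (INR (d j) * g'' j s * g j s - INR (d j) * g' j s * g' j s) / g j s ^ 2)).
    intros j Hj.
    apply (is_derive_div (fun s => INR (d j) * g' j s) (g j));
      [apply is_derive_scal, Hder, Hj|apply Hder, Hj|].
    pose proof (Hpos j Hj t Ht); lra.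
  - destruct (Hric t Ht) as [Htrace _].
    rewrite <- (Rminus_0_l (sumR _ _)), <- Htrace, <- sumR_minus.
    apply sumR_ext; intros j Hj; pose proof (Hpos j Hj t Ht); field; lra.
Qed.

Lemma dim_ge1 : 1 <= dim.
Proof.
  pose proof (sumR_ge_term r 0 (fun j => INR (d j)) ltac:(lia) (fun j _ => pos_INR (d j))) as H.
  cbv beta in H; rewrite Hd0 in H; exact H.
Qed.

Lemma mean_curv_sq_le (t : R) : 0 < t ->
  mean_curv t ^ 2 <= - dim * - sumR r (fun j => INR (d j) * (g' j t / g j t) ^ 2).
Proof.
  intros Ht; rewrite Rmult_opp_opp.
  replace (mean_curv t) with (sumR r (fun j => INR (d j) * (g' j t / g j t)))
    by (apply sumR_ext; intros; unfold Rdiv; ring).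
  apply sumR_cauchy_schwarz; [intros; apply pos_INR|pose proof dim_ge1; unfold dim in *; lra].
Qed.

Lemma mean_curv_le (t : R) : 1 < t -> mean_curv t <= dim / (t - 1).
Proof.
  apply (riccati_upper_bound mean_curv
    (fun s => - sumR r (fun j => INR (d j) * (g' j s / g j s) ^ 2)) 1 dim).
  - pose proof dim_ge1; lra.
  - intros s Hs; apply is_derive_mean_curv; lra.
  - intros s Hs; apply mean_curv_pos; lra.
  - intros s Hs; apply mean_curv_sq_le; lra.
Qed.

Lemma factor1_energy_growth (t : R) : 1 < t ->
  lam 1%nat * (t - 1) / (dim + 1) <= g 1%nat t * g' 1%nat t.
Proof.
  intros Ht; destruct (sumR_INR r d) as [N HN]; fold dim in HN; rewrite <- HN.
  assert (H1 : (1 <= 1 < r)%nat) by lia.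
  apply (linear_lower_bound (fun s => g 1%nat s * g' 1%nat s)
    (fun s => g' 1%nat s * g' 1%nat s + g 1%nat s * g'' 1%nat s)); [| | |exact Ht].
  - intros s Hs; apply (is_derive_mult (g 1%nat) (g' 1%nat));
      [apply Hder; lia|apply Hder; lia|apply Rmult_comm].
  - apply Rmult_le_pos; [left; apply g_pos|apply factor_deriv_nonneg]; lia + lra.
  - intros s Hs; rewrite HN.
    pose proof (g_pos 1 s H1 ltac:(lra)); pose proof (factor_deriv_nonneg 1 s H1 ltac:(lra)).
    pose proof (factor_eq 1 s H1 ltac:(lra)) as Heq; pose proof (mean_curv_le s Hs) as HL.
    assert (Hy : 0 <= g 1%nat s * g' 1%nat s) by (apply Rmult_le_pos; lra).
    assert (g 1%nat s * g' 1%nat s * mean_curv s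
            <= g 1%nat s * g' 1%nat s * (dim / (s - 1))) by (apply Rmult_le_compat_l; lra).
    replace (dim * (g 1%nat s * g' 1%nat s) / (s - 1))
      with (g 1%nat s * g' 1%nat s * (dim / (s - 1))) by (field; lra).
    nra.
Qed.

Lemma factor1_growth (t : R) : 1 <= t -> lam 1%nat / (dim + 1) * (t - 1) ^ 2 <= g 1%nat t ^ 2.
Proof.
  intros Ht.
  assert (Hgrowth := quadratic_lower_bound (fun s => g 1%nat s ^ 2)
    (fun s => INR 2 * g' 1%nat s * g 1%nat s ^ pred 2) 1 (lam 1%nat / (dim + 1))).
  assert (0 <= g 1%nat 1 ^ 2) by apply pow2_ge_0.
  enough (g 1%nat 1 ^ 2 + lam 1%nat / (dim + 1) * (t - 1) ^ 2 <= g 1%nat t ^ 2) by lra.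
  apply Hgrowth; [| |exact Ht].
  - intros s Hs; apply is_derive_pow, Hder; lia.
  - intros s Hs; pose proof (factor1_energy_growth s Hs); pose proof dim_ge1.
    replace (2 * (lam 1%nat / (dim + 1)) * (s - 1)) with (2 * (lam 1%nat * (s - 1) / (dim + 1)))
      by (field; lra).
    simpl; lra.
Qed.

Lemma exp_log_sq (x : R) : 0 < x -> exp (2 * ln x) = x ^ 2.
Proof.
  intros Hx; replace 2 with (INR 2) by (simpl; ring).
  rewrite <- ln_pow by exact Hx; apply exp_ln, pow_lt, Hx.
Qed.

(* [log_vol_rest] contains [d_1 ln g_1] with [d_1 >= 2], and no [ln g_j] decreases. *)
Lemma log_vol_rest_growth (t : R) : 0 <= t ->
  log_vol_rest 0 - 2 * ln (g 1%nat 0) <= log_vol_rest t - 2 * ln (g 1%nat t).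
Proof.
  intros Ht; assert (H1 : (1 <= 1 < r)%nat) by lia.
  apply (is_derive_nonneg_le (fun s => log_vol_rest s - 2 * ln (g 1%nat s))
    (fun s => mean_curv_off 0 s - 2 * (g' 1%nat s / g 1%nat s))); [exact Ht| |].
  - intros x Hx; apply (is_derive_minus log_vol_rest (fun s => 2 * ln (g 1%nat s)));
      [apply is_derive_log_vol_rest; lra|].
    apply is_derive_scal, is_derive_ln_comp; [apply Hder; lia|apply g_pos; [exact H1|lra]].
  - intros x Hx.
    assert (Hterm : INR (d 1%nat) * g' 1%nat x / g 1%nat x <= mean_curv_off 0 x).
    { apply (sumR_ge_term r 1 (fun j => if Nat.eqb j 0 then 0 else INR (d j) * g' j x / g j x));
        [lia|intros j Hj; destruct (Nat.eqb j 0); [lra|apply log_deriv_nonneg; lia + lra]]. }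
    assert (Hd1 : 2 <= INR (d 1%nat)) by (apply (le_INR 2), (Hdi 1 H1)).
    pose proof (g_pos 1 x H1 ltac:(lra)); pose proof (factor_deriv_nonneg 1 x H1 ltac:(lra)).
    assert (0 <= g' 1%nat x / g 1%nat x) by (apply Rdiv_le_0_compat; lra).
    replace (INR (d 1%nat) * g' 1%nat x / g 1%nat x)
      with (INR (d 1%nat) * (g' 1%nat x / g 1%nat x)) in Hterm by (unfold Rdiv; ring).
    nra.
Qed.

Lemma circle_deriv_le (t : R) : 0 <= t -> g' 0%nat t * g 1%nat t ^ 2 <= g 1%nat 0 ^ 2.
Proof.
  intros Ht; assert (H1 : (1 <= 1 < r)%nat) by lia.
  set (W := fun s => exp (log_vol_rest s - 2 * ln (g 1%nat s))).
  assert (Hsplit : forall s, 0 <= s -> exp (log_vol_rest s) = W s * g 1%nat s ^ 2).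
  { intros s Hs; unfold W; rewrite <- exp_log_sq, <- exp_plus by (apply g_pos; [exact H1|lra]).
    f_equal; ring. }
  assert (HW : W 0 <= W t).
  { destruct (Rle_lt_or_eq_dec _ _ (log_vol_rest_growth t Ht)) as [Hlt|Heq];
      unfold W; [left; apply exp_increasing, Hlt|rewrite Heq; lra]. }
  pose proof (circle_first_integral t Ht) as Hfirst.
  rewrite (Hsplit t Ht), (Hsplit 0 ltac:(lra)) in Hfirst.
  assert (0 < W 0) by apply exp_pos.
  pose proof (circle_deriv_pos t Ht); pose proof (pow2_ge_0 (g 1%nat 0)).
  apply (Rmult_le_reg_r (W t)); [lra|]; nra.
Qed.

Lemma circle_deriv_decay (t : R) : 1 < t ->
  g' 0%nat t <= g 1%nat 0 ^ 2 * (dim + 1) / lam 1%nat / (t - 1) ^ 2.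
Proof.
  intros Ht; assert (Hlam : 0 < lam 1%nat) by (apply Hdi; lia).
  pose proof dim_ge1; pose proof (circle_deriv_le t ltac:(lra)).
  pose proof (factor1_growth t ltac:(lra)); pose proof (circle_deriv_pos t ltac:(lra)).
  assert (Hp : 0 < (t - 1) ^ 2) by (apply pow_lt; lra).
  apply (Rmult_le_reg_r (lam 1%nat / (dim + 1) * (t - 1) ^ 2));
    [apply Rmult_lt_0_compat; [apply Rdiv_lt_0_compat|]; lra|].
  replace (g 1%nat 0 ^ 2 * (dim + 1) / lam 1%nat / (t - 1) ^ 2
           * (lam 1%nat / (dim + 1) * (t - 1) ^ 2)) with (g 1%nat 0 ^ 2) by (field; lra).
  nra.
Qed.

Lemma circle_bounded : exists B, forall t, 0 <= t -> g 0%nat t <= B.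
Proof.
  set (A := g 1%nat 0 ^ 2 * (dim + 1) / lam 1%nat).
  assert (HA : 0 <= A).
  { pose proof dim_ge1; assert (0 < lam 1%nat) by (apply Hdi; lia).
    apply Rdiv_le_0_compat; [apply Rmult_le_pos; [apply pow2_ge_0|]|]; lra. }
  exists (g 0%nat (1 + 1) + A); intros t Ht.
  destruct (Rle_lt_dec (1 + 1) t) as [Hbig|Hsmall].
  - apply (bounded_of_is_derive_le_inv_sq (g 0%nat) (g' 0%nat) 1 A HA); [| |exact Hbig].
    + intros s Hs; apply Hder; lia.
    + intros s Hs; apply circle_deriv_decay; lra.
  - pose proof (circle_increasing t (1 + 1) Ht Hsmall); lra.
Qed.

Lemma circle_sq_increasing (t1 t2 : R) : 0 <= t1 -> t1 < t2 ->
  g 0%nat t1 ^ 2 < g 0%nat t2 ^ 2.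
Proof.
  intros H1 H2; pose proof (circle_increasing t1 t2 H1 H2); pose proof (circle_nonneg t1 H1).
  nra.
Qed.

Lemma circle_sq_bounded : exists B, forall t, 0 <= t -> g 0%nat t ^ 2 <= B.
Proof.
  destruct circle_bounded as [B HB]; exists (B ^ 2); intros t Ht.
  apply pow_incr; split; [apply circle_nonneg|apply HB]; exact Ht.
Qed.

Lemma circle_sq_limit : exists L, 0 < L /\ is_lim (fun t => g 0%nat t ^ 2) p_infty L.
Proof.
  destruct circle_sq_bounded as [B HB].
  destruct (is_lim_p_infty_nondecreasing (fun t => g 0%nat t ^ 2) 0 B) as [L [Hlim Hle]];
    [|exact HB|].
  - intros x y [Hx Hxy]; destruct (Req_dec x y) as [->|]; [lra|].
    left; apply circle_sq_increasing; lra.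
  - exists L; split; [|exact Hlim].
    pose proof (circle_sq_increasing 0 1 ltac:(lra) ltac:(lra)) as H01.
    rewrite Hg0 in H01; specialize (Hle 1 ltac:(lra)); simpl in *; lra.
Qed.

End CircleCollapse.

Theorem lemma4p7 (r : nat) (d : nat -> nat) (lam : nat -> R)
    (g g' g'' : nat -> R -> R)
    (Hr : (2 <= r)%nat)
    (Hd0 : d 0%nat = 1%nat) (Hlam0 : lam 0%nat = 0)
    (Hdi : forall i, (1 <= i < r)%nat -> (1 < d i)%nat /\ 0 < lam i)
    (Hder : forall i, (i < r)%nat -> forall t,
        is_derive (g i) t (g' i t) /\ is_derive (g' i) t (g'' i t))
    (Hpos : forall i, (i < r)%nat -> forall t, 0 < t -> 0 < g i t)
    (Hg0 : g 0%nat 0 = 0) (Hg'0 : g' 0%nat 0 = 1)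
    (Hgi0 : forall i, (1 <= i < r)%nat -> g i 0 <> 0 /\ g' i 0 = 0)
    (Hric : forall t, 0 < t -> ricci_flat_at r d lam g g' g'' t) :
  (forall t1 t2, 0 <= t1 -> t1 < t2 -> (g 0%nat t1) ^ 2 < (g 0%nat t2) ^ 2) /\
  (exists B, forall t, 0 <= t -> (g 0%nat t) ^ 2 <= B) /\
  (exists L, 0 < L /\ is_lim (fun t => (g 0%nat t) ^ 2) p_infty L).
Proof.
  split; [|split].
  - intros t1 t2 H1 H2; eapply circle_sq_increasing; eassumption.
  - eapply circle_sq_bounded; eassumption.
  - eapply circle_sq_limit; eassumption.
Qed.
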